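(* Let $X,Y$ be connected FDSs with $[X]_0=[Y]_0$. If $\widetilde{X}=\widetilde{Y}$ (as forests, up to isomorphism), then $X=Y$.
   Context: A finite dynamical system (FDS) is a function $A:S_A\to S_A$ on a finite set, considered up to isomorphism of functional graphs (arcs $x\to A(x)$); it is connected if its functional graph is weakly connected. Write $A^{\circ m}$ for the $m$-fold iterate of $A$. A state $s$ is a cycle state if $A^{\circ m}(s)=s$ for some $m>0$. The depth of a state is $0$ for cycle states and $\operatorname{depth}(A(s))+1$ otherwise; $[A]_0$ is the restriction of $A$ to its cycle states. The unrolling $\widetilde{A}$ of $A$ is the forest whose vertex set is $\{(s,k)\in S_A\times\mathbb{N}: A^{\circ k}(s)\text{ is a cycle state}\}$, with an arc $(s,k)\to(A(s),k-1)$ for each such vertex with $k\ge1$; its roots are the vertices $(a,0)$ with $a$ a cycle state (so it is a disjoint union of one infinite rooted in-tree per cycle state). *)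

From mathcomp Require Import all_boot.
Set Implicit Arguments. Unset Strict Implicit. Unset Printing Implicit Defensive.

(* An FDS is a map X : T -> T on a finite type T. *)

Definition fds_iso (A B : Type) (f : A -> A) (g : B -> B) : Prop :=
  exists phi : A -> B, bijective phi /\ forall a, phi (f a) = g (phi a).

Definition graph_iso (A B : Type) (ra : A -> A -> Prop) (rb : B -> B -> Prop) : Prop :=
  exists phi : A -> B, bijective phi /\ forall u v, ra u v <-> rb (phi u) (phi v).

Definition fds_connected (T : finType) (X : T -> T) : Prop :=
  forall x y : T, connect (fun a b => (X a == b) || (X b == a)) x y.

Definition cycle_state (T : Type) (X : T -> T) (s : T) : Prop :=
  exists m, 0 < m /\ iter m X s = s.

Lemma cycle_state_step (T : Type) (X : T -> T) (s : T) :
  cycle_state X s -> cycle_state X (X s).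
Proof.
case=> [[|m] [Hm Hs]] //; exists m.+1; split => //.
by rewrite -iterSr iterS Hs.
Qed.

(* [X]_0 : restriction of X to its cycle states. *)
Definition cycle_part (T : Type) (X : T -> T) : {s | cycle_state X s} -> {s | cycle_state X s} :=
  fun s => exist _ (X (sval s)) (cycle_state_step (proj2_sig s)).

Definition unroll_vertex (T : Type) (X : T -> T) : Type :=
  {p : T * nat | cycle_state X (iter p.2 X p.1)}.

Definition unroll_arc (T : Type) (X : T -> T) (u v : unroll_vertex X) : Prop :=
  0 < (sval u).2 /\ sval v = (X (sval u).1, (sval u).2.-1).
Arguments cycle_part [T] X _.
Arguments unroll_arc [T] X _ _.

(* Fix a cycle state a of X and let d(s) be the distance from s to a.  Map s to the
   state of phi(s, d(s)), where phi is the isomorphism of unrollings.  Since phi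
   preserves levels and commutes with stepping down towards the roots, this map
   commutes with X and Y away from a; at a one uses that the cycles of X and Y have
   the same periods (each FDS has a single cycle by connectivity, and these cycles
   are isomorphic).  Two states s1, s2 with the same image and d(s1) < d(s2) would
   give a period d(s2) - d(s1) of the cycle of Y, hence of X, which lets s2 reach a
   after d(s1) steps already.  So the map is injective, and by symmetry bijective. *)

From Stdlib Require Import ProofIrrelevance.
From mathcomp Require Import all_boot.
Set Implicit Arguments. Unset Strict Implicit. Unset Printing Implicit Defensive.

Lemma sval_inj (A : Type) (P : A -> Prop) : injective (@sval A P).
Proof. by move=> u v; apply: eq_sig_hprop => x; apply: proof_irrelevance. Qed.

Lemma iter_morph (A B : Type) (f : A -> A) (g : B -> B) (h : A -> B) :
  (forall x, h (f x) = g (h x)) -> forall n x, h (iter n f x) = iter n g (h x).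
Proof. by move=> hf; elim=> //= n IHn x; rewrite hf IHn. Qed.

Lemma fds_iso_sym (A B : Type) (f : A -> A) (g : B -> B) :
  fds_iso f g -> fds_iso g f.
Proof.
case=> h [[h' hK h'K] hf]; exists h'; split; first by exists h.
by move=> y; apply: (can_inj hK); rewrite hf !h'K.
Qed.

Lemma graph_iso_sym (A B : Type) (ra : A -> A -> Prop) (rb : B -> B -> Prop) :
  graph_iso ra rb -> graph_iso rb ra.
Proof.
case=> h [[h' hK h'K] hr]; exists h'; split; first by exists h.
by move=> u v; rewrite -{1}(h'K u) -{1}(h'K v); apply: iff_sym.
Qed.

Section CycleStates.

Variables (A : Type) (X : A -> A).

Lemma cycle_state_iter n s : cycle_state X s -> cycle_state X (iter n X s).
Proof. by move=> cs; elim: n => //= n; apply: cycle_state_step. Qed.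

Definition cycle_period m := forall c, cycle_state X c -> iter m X c = c.

End CycleStates.

Lemma cycle_state_iter_ge (T : finType) (X : T -> T) n s :
  #|T| <= n -> cycle_state X (iter n X s).
Proof.
move=> le_Tn; have le_on : order X s <= n by apply: leq_trans le_Tn; apply: max_card.
rewrite -(subnK le_on) iterD; apply: cycle_state_iter.
have /trajectP [i lt_io Ei] := looping_order X s.
exists (order X s - i); split; first by rewrite subn_gt0.
by rewrite {1}Ei -iterD subnK // (ltnW lt_io).
Qed.

Lemma fds_iso_cycle_period (A B : Type) (X : A -> A) (Y : B -> B) m :
  fds_iso (cycle_part X) (cycle_part Y) -> cycle_period X m -> cycle_period Y m.
Proof.
case=> chi [[chi' _ chi'K] chi_morph] perX c cc.
pose y : {s | cycle_state Y s} := exist _ c cc.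
have sval_iter Z (z : {s | cycle_state Z s}) n :
  sval (iter n (cycle_part Z) z) = iter n Z (sval z) by apply: iter_morph.
have fix_x : iter m (cycle_part X) (chi' y) = chi' y.
  by apply: sval_inj; rewrite sval_iter perX //; apply: proj2_sig.
have : iter m (cycle_part Y) y = y.
  by rewrite -(chi'K y) -(iter_morph chi_morph) fix_x.
by move/(congr1 sval); rewrite sval_iter.
Qed.

Section Connected.

Variables (T : finType) (X : T -> T).
Hypothesis X_conn : fds_connected X.

Lemma connected_iter_meet x y : exists i j, iter i X x = iter j X y.
Proof.
have /connectP [p] := X_conn x y.
elim: p x => [|z p IHp] x /=; first by move=> _ ->; exists 0, 0.
case/andP=> /orP [] /eqP xz /IHp{}IHp /IHp [i [j Eij]].
  by exists i.+1, j; rewrite iterSr xz.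
case: i Eij => [|i] Eij; first by exists 0, j.+1; rewrite /= -Eij xz.
by exists i, j; rewrite -Eij iterSr xz.
Qed.

Lemma connected_cycle_iter s c : cycle_state X c -> exists i, iter i X s = c.
Proof.
case=> m [m_gt0 cm]; have [i [j Eij]] := connected_iter_meet c s.
have le_i_mi : i <= m * i by rewrite leq_pmull.
exists (m * i - i + j); rewrite iterD -Eij -iterD subnK //.
by rewrite mulnC iterM iter_fix.
Qed.

Lemma connected_cycle_period c m :
  cycle_state X c -> iter m X c = c -> cycle_period X m.
Proof.
move=> cc cm c' /(connected_cycle_iter c) [i <-].
by rewrite -iterD addnC iterD cm.
Qed.

End Connected.

Section Unrolling.

Variables (A : Type) (X : A -> A).
Implicit Types u v : unroll_vertex X.

Definition unroll_state u : A := (sval u).1.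
Definition unroll_level u : nat := (sval u).2.

Lemma unroll_vertex_inj u v :
  unroll_state u = unroll_state v -> unroll_level u = unroll_level v -> u = v.
Proof.
rewrite /unroll_state /unroll_level => Es El; apply: sval_inj.
by move: Es El; case: (sval u) (sval v) => [s k] [t l] /= -> ->.
Qed.

Lemma unroll_next_subproof u :
  cycle_state X (iter (unroll_level u).-1 X (X (unroll_state u))).
Proof.
have := proj2_sig u; rewrite -/(unroll_level u) -/(unroll_state u).
by case: (unroll_level u) => [|k] /=; [apply: cycle_state_step | rewrite -iterSr].
Qed.

(* Total: on a root (s, 0) it returns (X s, 0), which is not joined to it by an arc. *)
Definition unroll_next u : unroll_vertex X :=
  exist _ (X (unroll_state u), (unroll_level u).-1) (unroll_next_subproof u).

Lemma unroll_arcE u v : unroll_arc X u v <-> 0 < unroll_level u /\ v = unroll_next u.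
Proof. by split=> [[lvl_gt0 Ev] | [lvl_gt0 ->]] //; split=> //; apply: sval_inj. Qed.

Lemma unroll_state_next u : unroll_state (unroll_next u) = X (unroll_state u).
Proof. by []. Qed.

Lemma unroll_level_next u : unroll_level (unroll_next u) = (unroll_level u).-1.
Proof. by []. Qed.

Lemma unroll_state_iter_next n u :
  unroll_state (iter n unroll_next u) = iter n X (unroll_state u).
Proof. by elim: n => // n IHn; rewrite !iterS unroll_state_next IHn. Qed.

Lemma unroll_level_iter_next n u :
  unroll_level (iter n unroll_next u) = unroll_level u - n.
Proof. by elim: n => [|n IHn]; rewrite ?subn0 // iterS unroll_level_next IHn subnS. Qed.

Definition cycle_vertex t (ct : cycle_state X t) k : unroll_vertex X :=
  exist _ (t, k) (cycle_state_iter k ct).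

End Unrolling.

Arguments unroll_state {A X} u.
Arguments unroll_level {A X} u.
Arguments unroll_next {A X} u.

Section UnrollingMorphism.

Variables (A B : Type) (X : A -> A) (Y : B -> B).
Variable f : unroll_vertex X -> unroll_vertex Y.
Hypothesis f_arc : forall u v, unroll_arc X u v -> unroll_arc Y (f u) (f v).

Lemma unroll_morph_next u :
  0 < unroll_level u -> f (unroll_next u) = unroll_next (f u).
Proof.
move=> lvl_gt0.
have /f_arc/unroll_arcE [_ ->] // : unroll_arc X u (unroll_next u).
by apply/unroll_arcE; split.
Qed.

Lemma unroll_morph_iter_next n u :
  n <= unroll_level u -> f (iter n unroll_next u) = iter n unroll_next (f u).
Proof.
elim: n => [|n IHn] lt_n_lvl; first by [].
rewrite !iterS -(IHn (ltnW lt_n_lvl)) unroll_morph_next //.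
by rewrite unroll_level_iter_next subn_gt0.
Qed.

Lemma unroll_morph_level_le :
  (forall u, unroll_level u = 0 -> unroll_level (f u) = 0) ->
  forall u, unroll_level (f u) <= unroll_level u.
Proof.
move=> f_root u; have := f_root (iter (unroll_level u) unroll_next u).
rewrite unroll_level_iter_next subnn unroll_morph_iter_next //.
by rewrite unroll_level_iter_next => /(_ erefl) /eqP; rewrite subn_eq0.
Qed.

Lemma unroll_morph_root (g : unroll_vertex Y -> unroll_vertex X) :
  cancel f g -> (forall u v, unroll_arc Y u v -> unroll_arc X (g u) (g v)) ->
  forall u, unroll_level u = 0 -> unroll_level (f u) = 0.
Proof.
move=> fK g_arc u lvl0; case E: (unroll_level (f u)) => [|k] //.
have /g_arc : unroll_arc Y (f u) (unroll_next (f u)) by apply/unroll_arcE; rewrite E.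
by rewrite fK => /unroll_arcE []; rewrite lvl0.
Qed.

End UnrollingMorphism.

Lemma unroll_morph_cycle_state (A : Type) (B : finType) (X : A -> A) (Y : B -> B)
    (f : unroll_vertex X -> unroll_vertex Y) :
  (forall u v, unroll_arc X u v -> unroll_arc Y (f u) (f v)) ->
  forall u, cycle_state X (unroll_state u) -> cycle_state Y (unroll_state (f u)).
Proof.
move=> f_arc u ct; have [m [m_gt0 ctm]] := ct.
pose w := cycle_vertex ct (unroll_level u + m * #|B|).
have Ew : iter (m * #|B|) unroll_next w = u.
  apply: unroll_vertex_inj; rewrite ?unroll_level_iter_next ?addnK //.
  by rewrite unroll_state_iter_next mulnC iterM iter_fix.
rewrite -Ew unroll_morph_iter_next ?leq_addl // unroll_state_iter_next.
by apply: cycle_state_iter_ge; rewrite leq_pmull.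
Qed.

Lemma unroll_iso_level (A B : Type) (X : A -> A) (Y : B -> B)
    (phi : unroll_vertex X -> unroll_vertex Y) (g : unroll_vertex Y -> unroll_vertex X) :
  cancel phi g -> cancel g phi ->
  (forall u v, unroll_arc X u v <-> unroll_arc Y (phi u) (phi v)) ->
  forall u, unroll_level (phi u) = unroll_level u.
Proof.
move=> phiK gK phi_arc u.
have phi_hom u' v' := proj1 (phi_arc u' v').
have g_hom u' v' : unroll_arc Y u' v' -> unroll_arc X (g u') (g v').
  by move=> arc_uv; apply/phi_arc; rewrite !gK.
apply/eqP; rewrite eqn_leq (unroll_morph_level_le phi_hom) /=; last first.
  exact: unroll_morph_root g_hom.
have := unroll_morph_level_le g_hom _ (phi u); rewrite phiK; apply.
exact: unroll_morph_root phi_hom.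
Qed.

Section Embedding.

Variables (T U : finType) (X : T -> T) (Y : U -> U).
Hypotheses (X_conn : fds_connected X) (Y_conn : fds_connected Y).
Hypothesis cycle_iso : fds_iso (cycle_part X) (cycle_part Y).
Variables (phi : unroll_vertex X -> unroll_vertex Y) (g : unroll_vertex Y -> unroll_vertex X).
Hypotheses (phiK : cancel phi g) (gK : cancel g phi).
Hypothesis phi_arc : forall u v, unroll_arc X u v <-> unroll_arc Y (phi u) (phi v).
Variable a : T.
Hypothesis a_cycle : cycle_state X a.

Let phi_hom u v : unroll_arc X u v -> unroll_arc Y (phi u) (phi v).
Proof. exact: (proj1 (phi_arc u v)). Qed.

Let g_hom u v : unroll_arc Y u v -> unroll_arc X (g u) (g v).
Proof. by move=> arc_uv; apply/phi_arc; rewrite !gK. Qed.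

Lemma fconnect_a s : fconnect X s a.
Proof. by have [i <-] := connected_cycle_iter X_conn s a_cycle; apply: fconnect_iter. Qed.

Let dist s := findex X s a.

Lemma iter_dist s : iter (dist s) X s = a.
Proof. exact: iter_findex (fconnect_a s). Qed.

Lemma dist_next s : s != a -> dist s = (dist (X s)).+1.
Proof. by rewrite eq_sym; apply: fconnect_findex (fconnect_a s). Qed.

(* The lowest copy of s in the in-tree of the unrolling rooted at (a, 0). *)
Definition dist_vertex s : unroll_vertex X :=
  exist _ (s, dist s) (eq_ind_r (cycle_state X) a_cycle (iter_dist s)).

Lemma dist_vertex_level s : unroll_level (dist_vertex s) = dist s.
Proof. by []. Qed.

Definition embedding s : U := unroll_state (phi (dist_vertex s)).

Lemma embedding_cycle : cycle_state Y (embedding a).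
Proof. exact: unroll_morph_cycle_state phi_hom (dist_vertex a) a_cycle. Qed.

Lemma embedding_morph s : embedding (X s) = Y (embedding s).
Proof.
rewrite /embedding; have [-> | s_neq_a] := eqVneq s a; last first.
  have lvl_gt0 : 0 < unroll_level (dist_vertex s) by rewrite dist_vertex_level dist_next.
  have <- : unroll_next (dist_vertex s) = dist_vertex (X s).
    by apply: unroll_vertex_inj; rewrite // unroll_level_next dist_vertex_level dist_next.
  by rewrite (unroll_morph_next phi_hom).
(* The arc into the lowest copy (X a, L - 1) of X a comes from (a, L), not from
   (a, 0); the images of these two copies of a have the same state because L is a
   period of every cycle of Y. *)
set L := (dist (X a)).+1.
have aL : iter L X a = a by rewrite /L iterSr iter_dist.
pose w := cycle_vertex a_cycle L.
have <- : unroll_next w = dist_vertex (X a) by apply: unroll_vertex_inj.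
have Ew : iter L unroll_next w = dist_vertex a.
  apply: unroll_vertex_inj; rewrite ?unroll_state_iter_next ?unroll_level_iter_next.
    exact: aL.
  by rewrite subnn dist_vertex_level /dist findex0.
have c_cycle : cycle_state Y (unroll_state (phi w)).
  exact: unroll_morph_cycle_state phi_hom w a_cycle.
have periodL : cycle_period Y L.
  exact: fds_iso_cycle_period cycle_iso (connected_cycle_period X_conn a_cycle aL).
rewrite (unroll_morph_next phi_hom) // -Ew (unroll_morph_iter_next phi_hom) //.
by rewrite unroll_state_iter_next periodL.
Qed.

Lemma embedding_iter n s : embedding (iter n X s) = iter n Y (embedding s).
Proof. exact: (iter_morph embedding_morph n s). Qed.

Lemma embedding_eq_dist_le s1 s2 : embedding s1 = embedding s2 -> dist s2 <= dist s1.
Proof.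
(* Going dist s1 steps down from the copy of s2 gives a vertex whose image has the
   cyclic state embedding a, so its own state X^(dist s1) s2 is cyclic; moreover d is
   a period of embedding a, hence of every cycle of X. *)
move=> E; rewrite leqNgt; apply/negP => lt12.
set d := dist s2 - dist s1.
have Ea : embedding a = iter (dist s1) Y (embedding s2).
  by rewrite -E -embedding_iter iter_dist.
pose u := iter (dist s1) unroll_next (dist_vertex s2).
have Eu : unroll_state (phi u) = embedding a.
  rewrite (unroll_morph_iter_next phi_hom) ?unroll_state_iter_next -?Ea //.
  exact: ltnW lt12.
have t_cycle : cycle_state X (iter (dist s1) X s2).
  rewrite -[iter _ _ _](unroll_state_iter_next _ (dist_vertex s2)) -/u -[u]phiK.
  by apply: unroll_morph_cycle_state g_hom _ _; rewrite Eu; apply: embedding_cycle.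
have period_d : cycle_period X d.
  apply: fds_iso_cycle_period (fds_iso_sym cycle_iso) _.
  apply: connected_cycle_period Y_conn _ _ embedding_cycle _.
  by rewrite {1}Ea -iterD subnK ?(ltnW lt12) // -embedding_iter iter_dist.
have t_a : iter (dist s1) X s2 = a.
  by rewrite -(period_d _ t_cycle) -iterD subnK ?(ltnW lt12) // iter_dist.
have lt_order : dist s1 < order X s2 := ltn_trans lt12 (findex_max (fconnect_a s2)).
have := findex_iter lt_order; rewrite t_a => dist_s2.
by move: lt12; rewrite -[dist s2]/(findex X s2 a) dist_s2 ltnn.
Qed.

Lemma embedding_inj : injective embedding.
Proof.
move=> s1 s2 E.
have dist_eq : dist s1 = dist s2.
  by apply/eqP; rewrite eqn_leq !embedding_eq_dist_le.
have : phi (dist_vertex s1) = phi (dist_vertex s2).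
  apply: unroll_vertex_inj; first exact: E.
  by rewrite !(unroll_iso_level phiK gK phi_arc) !dist_vertex_level dist_eq.
by move/(can_inj phiK)/(congr1 unroll_state).
Qed.

End Embedding.

Lemma unroll_iso_embedding (T U : finType) (X : T -> T) (Y : U -> U) :
  fds_connected X -> fds_connected Y ->
  fds_iso (cycle_part X) (cycle_part Y) ->
  graph_iso (unroll_arc X) (unroll_arc Y) ->
  exists psi : T -> U, injective psi /\ forall s, psi (X s) = Y (psi s).
Proof.
move=> X_conn Y_conn cycle_iso [phi [[g phiK gK] phi_arc]].
case: (pickP (fun _ : T => true)) => [s0 _ | T0]; last first.
  have T_empty (s : T) : False by have := T0 s.
  by exists (fun s => match T_empty s with end); split=> s; case: (T_empty s).
have a_cycle := cycle_state_iter_ge X s0 (leqnn #|T|).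
exists (embedding X_conn phi a_cycle); split.
  exact: (embedding_inj Y_conn cycle_iso phiK gK phi_arc).
exact: (embedding_morph X_conn cycle_iso phi_arc a_cycle).
Qed.

Theorem mainTheorem13 (T U : finType) (X : T -> T) (Y : U -> U) :
  fds_connected X -> fds_connected Y ->
  fds_iso (cycle_part X) (cycle_part Y) ->
  graph_iso (unroll_arc X) (unroll_arc Y) ->
  fds_iso X Y.
Proof.
move=> X_conn Y_conn cycle_iso unroll_iso.
have [psi [psi_inj psi_morph]] := unroll_iso_embedding X_conn Y_conn cycle_iso unroll_iso.
have [psi' [psi'_inj _]] :=
  unroll_iso_embedding Y_conn X_conn (fds_iso_sym cycle_iso) (graph_iso_sym unroll_iso).
exists psi; split=> //.
exact: inj_card_bij psi_inj (leq_card psi' psi'_inj).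
Qed.
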